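(* Let $G$ be a finite simple graph on vertex set $\{x_1,\dots,x_n\}$ with $\operatorname{mat}(G)\geq 2$, let $\Bbbk$ be a field and $S=\Bbbk[x_1,\dots,x_n]$. Then $\operatorname{reg}(I(G)^{[2]})\geq \operatorname{aim}(G,2)+2$.
   Context: $I(G)\subseteq S$ is the edge ideal. $\operatorname{mat}(G)$ is the matching number. $I(G)^{[2]}$ is the ideal generated by the products $e_1e_2$ over all matchings $\{e_1,e_2\}$ of size $2$ (edge $\{x_i,x_j\}$ identified with $x_ix_j$). $\operatorname{reg}$ is Castelnuovo–Mumford regularity. Two edges form a gap if they are disjoint and no edge of $G$ joins a vertex of one to a vertex of the other. A sequence $(a_1,\dots,a_n)$ of integers is $k$-admissable if $a_i\ge1$ for all $i$ and $\sum a_i\le n+k-1$. For $1\le k\le\operatorname{mat}(G)$, a matching $M$ is $k$-admissable if there are nonempty pairwise disjoint $M_1,\dots,M_r\subseteq M$ with union $M$ such that edges from different $M_i$'s always form a gap in $G$, $(|M_1|,\dots,|M_r|)$ is $k$-admissable, and the induced subgraph of $G$ on $\bigcup_{e\in M_i}e$ is a forest for each $i$. $\operatorname{aim}(G,k)$ is the maximum size of a $k$-admissable matching ($0$ if none). *)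

From mathcomp Require Import all_boot all_order all_algebra.
From Stdlib Require Import ClassicalEpsilon.
Set Implicit Arguments. Unset Strict Implicit. Unset Printing Implicit Defensive.
Import GRing.Theory.
Local Open Scope ring_scope.

Definition propb (P : Prop) : bool :=
  if excluded_middle_informative P then true else false.

Section Defs.
Variable n : nat.

(* A finite simple graph on vertices 'I_n (vertex i <-> variable x_i) is a
   symmetric irreflexive relation e. *)
Definition simple_graph (e : rel 'I_n) := symmetric e /\ irreflexive e.

Definition is_edge (e : rel 'I_n) (E : {set 'I_n}) : bool :=
  [exists u, exists v, (e u v) && (E == [set u; v])].

Definition is_matching (e : rel 'I_n) (M : {set {set 'I_n}}) : bool :=
  [forall E in M, is_edge e E] &&
  [forall E1 in M, forall E2 in M, (E1 != E2) ==> [disjoint E1 & E2]].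

Definition mat (e : rel 'I_n) : nat :=
  (\max_(M : {set {set 'I_n}} | is_matching e M) #|M|)%N.

Definition gap (e : rel 'I_n) (E1 E2 : {set 'I_n}) : bool :=
  [disjoint E1 & E2] && [forall u in E1, forall v in E2, ~~ e u v].

Definition induced_forest (e : rel 'I_n) (V : {set 'I_n}) : Prop :=
  forall s : seq 'I_n, uniq s -> (3 <= size s)%N -> {subset s <= V} ->
    ~~ cycle e s.

Definition adm_seq (k : nat) (s : seq nat) : bool :=
  all (fun a => 0 < a)%N s && (sumn s <= size s + k - 1)%N.

Definition k_admissible (e : rel 'I_n) (k : nat) (M : {set {set 'I_n}}) : Prop :=
  is_matching e M /\
  exists P : {set {set {set 'I_n}}},
    partition P M /\
    (forall Mi Mj, Mi \in P -> Mj \in P -> Mi != Mj ->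
       forall E1 E2, E1 \in Mi -> E2 \in Mj -> gap e E1 E2) /\
    adm_seq k (map (fun Mi : {set {set 'I_n}} => #|Mi|) (enum P)) /\
    (forall Mi, Mi \in P -> induced_forest e (cover Mi)).

Definition aim (e : rel 'I_n) (k : nat) : nat :=
  (\max_(M : {set {set 'I_n}} | propb (k_admissible e k M)) #|M|)%N.

(* A monomial ideal is represented by the predicate on exponent vectors
   b : 'I_n -> nat telling whether x^b belongs to the ideal. *)

(* I(G)^[2]: generated by e1 e2, {e1,e2} a matching of size 2; x^b lies in it
   iff x^b is divisible by such a generator. *)
Definition I2_mem (e : rel 'I_n) (b : 'I_n -> nat) : bool :=
  [exists M : {set {set 'I_n}},
     [&& is_matching e M, #|M| == 2%N & [forall v in cover M, 0 < b v]%N]].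

(* Multigraded Koszul complex K(x_1..x_n) (x) I in multidegree a:
   K_i (x) I in degree a has basis e_F, |F| = i, e_F <= a, x^(a - e_F) in I. *)
Definition kbasis (mem : ('I_n -> nat) -> bool) (i : nat) (a : 'I_n -> nat)
  : {set {set 'I_n}} :=
  [set F : {set 'I_n} | [&& #|F| == i, [forall j in F, 0 < a j]%N &
                           mem (fun j => a j - (j \in F))%N]].

(* matrix of the Koszul differential K_{i+1} (x) I -> K_i (x) I in degree a
   (row convention), indexed by all subsets of 'I_n *)
Definition kdiff (K : fieldType) (mem : ('I_n -> nat) -> bool) (i : nat)
  (a : 'I_n -> nat) : 'M[K]_(#|{set 'I_n}|) :=
  \matrix_(p, q)
    (let F := enum_val p in let F' := enum_val q in
     if [&& F \in kbasis mem i.+1 a, F' \in kbasis mem i a & F' \subset F]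
     then \sum_(j in F :\: F') (-1) ^+ #|[set l in F | (l < j)%N]|
     else 0).

(* multigraded Betti number beta_{i,a}(I) = dim_K Tor_i^S(K, I)_a
   = dim H_i(K(x) (x) I)_a *)
Definition betti (K : fieldType) (mem : ('I_n -> nat) -> bool) (i : nat)
  (a : 'I_n -> nat) : nat :=
  (#|kbasis mem i a| - (if i is i'.+1 then \rank (kdiff K mem i' a) else 0)
     - \rank (kdiff K mem i a))%N.

(* reg(I) = max { j - i : beta_{i,j}(I) != 0 }, beta_{i,j} = sum_{|a|=j} beta_{i,a};
   "reg(I) >= r" *)
Definition reg_at_least (K : fieldType) (mem : ('I_n -> nat) -> bool) (r : nat)
  : Prop :=
  exists (i : nat) (a : 'I_n -> nat),
    betti K mem i a != 0%N /\ (r + i <= \sum_(j < n) a j)%N.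

End Defs.

(* If aim(G,2) <= 2, the product of the edges of any 2-matching is a minimal
   generator of degree 4. Otherwise let M be a 2-admissible matching with
   m >= 3 edges. Admissibility means that every edge of G on V(M) either lies
   in M or joins the two edges p, q forming the only part of size two. In the
   squarefree multidegree V(M) we exhibit a nonzero class in the Koszul
   homology H_(m-2) of I(G)^[2]. Choose u in p and one vertex of every edge of
   M other than p, q. This gives a set tau of size m - 1. Every facet of tau
   leaves a 2-matching uncovered, so the formal boundary of e_tau is a cycle.
   It pairs to +-1 with the cochain that is a sign on the transversals of
   M \ {p, q} and 0 elsewhere. That cochain is a cocycle: if a face G has a
   transversal facet G \ j0, then j0 lies on an edge E of M \ {p, q}
   (otherwise V(M) \ G would fit into (p u q) \ j0, which has only 3
   vertices). Then exactly the two facets dropping a vertex of E are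
   transversal, and their signs cancel. Hence beta_(m-2, V(M)) <> 0 and
   reg >= 2m - (m - 2) = m + 2. *)

From mathcomp Require Import all_boot all_order all_algebra.
From mathcomp Require Import zify.
From Stdlib Require Import ClassicalEpsilon.
Set Implicit Arguments. Unset Strict Implicit. Unset Printing Implicit Defensive.
Import GRing.Theory.

(** * Koszul homology of a monomial ideal *)

Section KoszulSigns.
Variables (n : nat) (K : fieldType).
Local Open Scope ring_scope.

Definition koszul_sign (F : {set 'I_n}) (j : 'I_n) : K :=
  (-1) ^+ #|[set l in F | (l < j)%N]|.

Lemma koszul_sign_swap (G : {set 'I_n}) j l : j \in G -> l \in G -> j != l ->
  koszul_sign G j * koszul_sign (G :\ j) l + koszul_sign G l * koszul_sign (G :\ l) j = 0.
Proof.
wlog jl : j l / (j < l)%N.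
  move=> wlog_jl jG lG jl; case: (ltngtP j l) => [lt_jl|lt_lj|/val_inj eq_jl].
  - exact: wlog_jl.
  - by rewrite addrC wlog_jl // eq_sym.
  - by rewrite eq_jl eqxx in jl.
move=> jG lG _.
have below_l : [set x in G | (x < l)%N] = j |: [set x in G :\ j | (x < l)%N].
  by apply/setP => x; rewrite !inE; case: eqVneq => [->|]; rewrite ?jG ?jl.
have below_j : [set x in G :\ l | (x < j)%N] = [set x in G | (x < j)%N].
  apply/setP => x; rewrite !inE; case: eqVneq => [->|] //=.
  by rewrite ltnNge (ltnW jl) andbF.
rewrite /koszul_sign below_l below_j cardsU1 !inE eqxx /= add1n exprS.
by rewrite mulN1r mulNr [X in _ - X]mulrC subrr.
Qed.

Lemma sum_over_facets (f : {set 'I_n} -> K) (G : {set 'I_n}) :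
  (forall F, f F != 0 -> F \subset G /\ #|F|.+1 = #|G|) ->
  \sum_F f F = \sum_(j in G) f (G :\ j).
Proof.
move=> supp_f; rewrite (bigID (mem [set G :\ j | j in G])) /=.
rewrite [X in _ + X]big1 ?addr0; last first.
  move=> F Fnfacet; apply/eqP; apply: contraR Fnfacet => /supp_f [FG cardF].
  have /cards1P [j GFj] : #|G :\: F| == 1%N.
    by rewrite cardsD (setIidPr FG) -cardF subSnn.
  have jG : j \in G by have := subsetDl G F; rewrite GFj sub1set.
  apply/imsetP; exists j => //.
  by rewrite -GFj setDDr setDv set0U (setIidPr FG).
rewrite big_imset //= => x y xG _ /setP /(_ x).
by rewrite !inE eqxx xG; case: eqVneq.
Qed.

Lemma koszul_boundary_boundary (G F : {set 'I_n}) : #|G| = (#|F| + 2)%N ->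
  \sum_(j in G) koszul_sign G j *
    (if F \subset G :\ j then \sum_(l in (G :\ j) :\: F) koszul_sign (G :\ j) l else 0) = 0.
Proof.
have [FG cardG|FnG _] := boolP (F \subset G); last first.
  apply: big1 => j _; rewrite ifF ?mulr0 //; apply: contraNF FnG.
  by move/subset_trans; apply; exact: subD1set.
have /cards2P [j [l [jl GFjl]]] : #|G :\: F| == 2%N.
  by rewrite cardsD (setIidPr FG) cardG addKn.
have inGF x : (x \in G) && (x \notin F) = (x == j) || (x == l).
  by move/setP: GFjl => /(_ x); rewrite !inE andbC.
have /andP[jG jF] : (j \in G) && (j \notin F) by rewrite inGF eqxx.
have /andP[lG lF] : (l \in G) && (l \notin F) by rewrite inGF eqxx orbT.
have facet x y : x \in G -> x \notin F -> x != y ->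
    (forall z, (z == j) || (z == l) = (z == x) || (z == y)) ->
    F \subset G :\ x /\ (G :\ x) :\: F = [set y].
  move=> xG xF xy jl_xy; split.
    by apply/subsetP => z zF; rewrite !inE (subsetP FG _ zF) andbT; apply: contraNneq xF => <-.
  apply/setP => z; rewrite !inE andbC -andbA inGF jl_xy.
  by case: (eqVneq z x) => [->|_]; rewrite /= ?(negbTE xy).
rewrite (bigD1 j) // (bigD1 l) /=; last by rewrite lG eq_sym.
rewrite [X in _ + (_ + X)]big1 ?addr0; last first.
  move=> k /andP[/andP[kG kj] kl]; rewrite ifF ?mulr0 //; apply/negbTE/negP.
  have kF : k \in F by move: (inGF k); rewrite kG (negbTE kj) (negbTE kl) => /negbFE.
  by move/subsetP/(_ k kF); rewrite !inE eqxx.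
have [sj ->] := facet j l jG jF jl (fun z => erefl).
have lj : l != j by rewrite eq_sym.
have [sl ->] := facet l j lG lF lj (fun z => orbC _ _).
by rewrite sj sl !big_set1; exact: koszul_sign_swap.
Qed.
End KoszulSigns.

Section RankBounds.
Variable F : fieldType.
Local Open Scope ring_scope.

Lemma homology_pairing_rank (m N k : nat) (P : 'M[F]_N)
    (B : 'M[F]_(m, N)) (A : 'M[F]_(N, k)) (z : 'rV[F]_N) (c : 'cV[F]_N) :
  B *m P = B -> z *m P = z -> P *m A = A ->
  B *m A = 0 -> z *m A = 0 -> B *m c = 0 -> z *m c != 0 ->
  (\rank B + \rank A < \rank P)%N.
Proof.
move=> BP zP PA BA zA Bc zc.
have BPkerA : (B <= P :&: kermx A)%MS.
  by rewrite sub_capmx -{1}BP submxMl; apply/sub_kermxP.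
have zPkerA : (z <= P :&: kermx A)%MS.
  by rewrite sub_capmx -{1}zP submxMl; apply/sub_kermxP.
have znB : ~~ (z <= B)%MS.
  by apply/negP => /submxP [w zw]; move: zc; rewrite zw -mulmxA Bc mulmx0 eqxx.
have /rank_ltmx ltB : (B < P :&: kermx A)%MS.
  by rewrite ltmxE BPkerA; apply: contra znB => /(submx_trans zPkerA).
have fullPkerA : \rank (P + kermx A)%MS = N.
  apply/eqP; rewrite eqn_leq rank_leq_col -{1}(mxrank1 F N) mxrankS //.
  rewrite -(subrK P 1%:M) addrC addmx_sub_adds //.
  by apply/sub_kermxP; rewrite mulmxBl mul1mx PA subrr.
have := mxrank_sum_cap P (kermx A); rewrite fullPkerA mxrank_ker.
have := rank_leq_row A; lia.
Qed.

Lemma mxrank_diag_mx_le (N : nat) (d : 'rV[F]_N) :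
  (\rank (diag_mx d) <= #|[pred i | d ord0 i != 0%R]|)%N.
Proof.
rewrite diag_mx_sum_delta (bigID (fun i => d 0 i != 0)) /= [X in (_ + X)%R]big1 ?addr0; last first.
  by move=> i /negPn/eqP ->; rewrite scale0r.
rewrite -sum1_card; apply: (big_ind2 (fun (D : 'M_N) k => \rank D <= k)%N).
- by rewrite mxrank0.
- by move=> D1 k1 D2 k2 h1 h2; apply: leq_trans (mxrank_add _ _) (leq_add h1 h2).
- by move=> i _; rewrite (leq_trans (mxrankS (scalemx_sub _ (submx_refl _)))) ?mxrank_delta.
Qed.

End RankBounds.

Definition monomial_ideal (n : nat) (mem : ('I_n -> nat) -> bool) : Prop :=
  forall b b', (forall j, b j <= b' j) -> mem b -> mem b'.

Section KoszulHomology.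
Variables (n : nat) (K : fieldType) (mem : ('I_n -> nat) -> bool) (a : 'I_n -> nat).
Hypothesis mem_ideal : monomial_ideal mem.
Local Open Scope ring_scope.

Definition kcoef i (F F' : {set 'I_n}) : K :=
  if [&& F \in kbasis mem i.+1 a, F' \in kbasis mem i a & F' \subset F]
  then \sum_(j in F :\: F') koszul_sign K F j else 0.

Lemma sum_enum_val (f : {set 'I_n} -> K) :
  \sum_(p < #|{set 'I_n}|) f (enum_val p) = \sum_F f F.
Proof. by rewrite -(big_enum_val (A := predT)). Qed.

Lemma kbasis_card i F : F \in kbasis mem i a -> #|F| = i.
Proof. by rewrite inE => /and3P[/eqP]. Qed.

Lemma kbasis_facet k G j :
  G \in kbasis mem k.+1 a -> j \in G -> G :\ j \in kbasis mem k a.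
Proof.
rewrite !inE => /and3P[/eqP cardG /forall_inP posG memG] jG; apply/and3P; split.
- by have := cardsD1 j G; rewrite jG cardG add1n => -[<-].
- by apply/forall_inP => x; rewrite !inE => /andP[_ /posG].
- apply: mem_ideal memG => x; rewrite !inE leq_sub2l //.
  by case: (x \in G); rewrite ?andbT ?andbF ?leq_b1.
Qed.

Lemma kcoef_neq0 k F F' : kcoef k F F' != 0 ->
  [/\ F \in kbasis mem k.+1 a, F' \in kbasis mem k a & F' \subset F].
Proof. by rewrite /kcoef; case: and3P => [[]|]; rewrite ?eqxx. Qed.

Lemma kcoef_facet k G j :
  G \in kbasis mem k.+1 a -> j \in G -> kcoef k G (G :\ j) = koszul_sign K G j.
Proof.
move=> Gk jG; rewrite /kcoef Gk kbasis_facet // subD1set /=.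
suff -> : G :\: (G :\ j) = [set j] by rewrite big_set1.
by apply/setP => x; rewrite !inE; case: eqVneq => [->|_]; rewrite ?jG //=; case: (x \in G).
Qed.

Lemma sum_kcoef_facets k G (g : {set 'I_n} -> K) : G \in kbasis mem k.+1 a ->
  \sum_F kcoef k G F * g F = \sum_(j in G) koszul_sign K G j * g (G :\ j).
Proof.
move=> Gk; rewrite (sum_over_facets (G := G)).
  by apply: eq_bigr => j jG; rewrite kcoef_facet.
move=> F; rewrite mulf_eq0 negb_or => /andP[/kcoef_neq0[Gk' Fk FG] _].
by rewrite (kbasis_card Gk') (kbasis_card Fk).
Qed.

Lemma kcoef_boundary_facets k (G F' : {set 'I_n}) :
  #|G| = k.+2 -> (forall j, j \in G -> G :\ j \in kbasis mem k.+1 a) ->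
  \sum_(j in G) koszul_sign K G j * kcoef k (G :\ j) F' = 0.
Proof.
move=> cardG facetsG; have [F'k|F'nk] := boolP (F' \in kbasis mem k a); last first.
  by apply: big1 => j _; rewrite /kcoef (negbTE F'nk) andbF mulr0.
rewrite -[RHS](koszul_boundary_boundary K (G := G) (F := F')); last first.
  by rewrite cardG (kbasis_card F'k) addn2.
by apply: eq_bigr => j jG; rewrite /kcoef facetsG // F'k.
Qed.

Lemma kdiffE i p q : kdiff K mem i a p q = kcoef i (enum_val p) (enum_val q).
Proof. by rewrite mxE. Qed.

Lemma mulmx_set_entry m k (X : 'M[K]_(m, #|{set 'I_n}|)) (Y : 'M[K]_(#|{set 'I_n}|, k)) r s :
  (X *m Y) r s = \sum_F X r (enum_rank F) * Y (enum_rank F) s.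
Proof. by rewrite mxE -sum_enum_val; apply: eq_bigr => p _; rewrite enum_valK. Qed.

Lemma kdiff_kdiff i : kdiff K mem i.+1 a *m kdiff K mem i a = 0.
Proof.
apply/matrixP => p q; rewrite [RHS]mxE mulmx_set_entry.
under eq_bigr do rewrite !kdiffE !enum_rankK.
have [Gk|Gnk] := boolP (enum_val p \in kbasis mem i.+2 a); last first.
  by apply: big1 => F _; rewrite /kcoef (negbTE Gnk) mul0r.
rewrite sum_kcoef_facets // kcoef_boundary_facets ?(kbasis_card Gk) //.
by move=> j; exact: kbasis_facet.
Qed.

Definition kbasis_proj i : 'M[K]_#|{set 'I_n}| :=
  diag_mx (\row_p (enum_val p \in kbasis mem i a)%:R).

Lemma mxrank_kbasis_proj i : (\rank (kbasis_proj i) <= #|kbasis mem i a|)%N.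
Proof.
apply: leq_trans (mxrank_diag_mx_le _) (eq_leq _).
rewrite -[RHS](on_card_preimset (onW_bij (kbasis mem i a) (@enum_val_bij _))).
apply: eq_card => p; rewrite [LHS]inE [RHS]inE mxE.
by case: (enum_val p \in _); rewrite ?oner_eq0 ?eqxx.
Qed.

Lemma kdiff_kbasis_proj i : kdiff K mem i a *m kbasis_proj i = kdiff K mem i a.
Proof.
apply/matrixP => p q; rewrite mul_mx_diag mxE !kdiffE mxE /kcoef.
by case: (enum_val q \in _); rewrite ?mulr1 ?mulr0 ?andbF.
Qed.

Lemma kbasis_proj_kdiff i : kbasis_proj i.+1 *m kdiff K mem i a = kdiff K mem i a.
Proof.
apply/matrixP => p q; rewrite mul_diag_mx mxE !kdiffE mxE /kcoef.
by case: (enum_val p \in _); rewrite ?mul1r ?mul0r.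
Qed.

Lemma betti_neq0_of_pairing i (z : 'rV[K]_#|{set 'I_n}|) (c : 'cV[K]_#|{set 'I_n}|) :
  z *m kbasis_proj i.+1 = z -> z *m kdiff K mem i a = 0 ->
  kdiff K mem i.+1 a *m c = 0 -> z *m c != 0 ->
  betti K mem i.+1 a != 0%N.
Proof.
move=> zP zA Bc zc.
have := homology_pairing_rank (kdiff_kbasis_proj i.+1) zP (kbasis_proj_kdiff i)
  (kdiff_kdiff i) zA Bc zc.
move/leq_trans/(_ (mxrank_kbasis_proj i.+1)).
by rewrite /betti /= -subnDA subn_eq0 -ltnNge addnC.
Qed.

Lemma betti_neq0_of_boundary_pairing i (tau : {set 'I_n}) (c : {set 'I_n} -> K) :
  (forall j, j \in tau -> tau :\ j \in kbasis mem i.+1 a) ->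
  (forall G, G \in kbasis mem i.+2 a ->
     \sum_(j in G) koszul_sign K G j * c (G :\ j) = 0) ->
  \sum_(j in tau) koszul_sign K tau j * c (tau :\ j) != 0 ->
  betti K mem i.+1 a != 0%N.
Proof.
move=> facets cocycle pairing.
have [j0 j0tau] : exists j0, j0 \in tau.
  by apply/set0Pn; apply: contraNneq pairing => ->; rewrite big_set0.
have cardtau : #|tau| = i.+2.
  by have := cardsD1 j0 tau; rewrite j0tau (kbasis_card (facets _ j0tau)).
pose dtau (F : {set 'I_n}) := \sum_(j in tau) (F == tau :\ j)%:R * koszul_sign K tau j.
have sum_dtau (g : {set 'I_n} -> K) :
    \sum_F dtau F * g F = \sum_(j in tau) koszul_sign K tau j * g (tau :\ j).
  under eq_bigr do rewrite big_distrl /=.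
  rewrite exchange_big /=; apply: eq_bigr => j _.
  rewrite (bigD1 (tau :\ j)) //= eqxx mul1r big1 ?addr0 // => F /negbTE ->.
  by rewrite !mul0r.
apply: (betti_neq0_of_pairing (z := \row_p dtau (enum_val p)) (c := \col_p c (enum_val p))).
- apply/matrixP => p q; rewrite mul_mx_diag !mxE.
  case: (boolP (enum_val q \in _)) => [_|qnk]; rewrite ?mulr1 // mulr0.
  rewrite /dtau big1 // => j /facets jfacet.
  have /negbTE-> : enum_val q != tau :\ j by apply: contraNneq qnk => ->.
  by rewrite mul0r.
- apply/matrixP => p q; rewrite [RHS]mxE mulmx_set_entry.
  under eq_bigr do rewrite kdiffE mxE !enum_rankK.
  by rewrite sum_dtau kcoef_boundary_facets.
- apply/matrixP => p q; rewrite [RHS]mxE mulmx_set_entry.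
  under eq_bigr do rewrite kdiffE mxE !enum_rankK.
  have [Gk|Gnk] := boolP (enum_val p \in kbasis mem i.+2 a).
    by rewrite sum_kcoef_facets // cocycle.
  by apply: big1 => F _; rewrite /kcoef (negbTE Gnk) mul0r.
apply: contraNneq pairing => /matrixP/(_ 0 0); rewrite [RHS]mxE mulmx_set_entry => zc0.
apply/eqP; rewrite -sum_dtau -{}[RHS]zc0.
by apply: eq_bigr => F _; rewrite !mxE !enum_rankK.
Qed.
End KoszulHomology.

Section Inversions.
Variables (n : nat) (r : 'I_n -> nat).

Definition inverted (x y : 'I_n) : bool := (x < y) && (r y < r x).

Definition inversions (X : {set 'I_n}) : nat :=
  \sum_(x in X) \sum_(y in X) inverted x y.

Lemma inversions_setD1 (G : {set 'I_n}) x : x \in G ->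
  inversions G = inversions (G :\ x) + \sum_(y in G) (inverted x y + inverted y x).
Proof.
move=> xG; have xGx : x \notin G :\ x by rewrite !inE eqxx.
rewrite -{1}(setD1K xG) [in RHS](big_setD1 x) //= /inversions.
under eq_bigr do rewrite big_setU1 //=.
rewrite big_setU1 //= /inverted ltnn /= !big_split /=; lia.
Qed.

Lemma card_below (G : {set 'I_n}) x :
  #|[set l in G | l < x]| = \sum_(y in G) (y < x).
Proof.
rewrite -sum1_card big_mkcond [RHS]big_mkcond; apply: eq_bigr => y _.
by rewrite inE; case: (y \in G); case: (y < x).
Qed.

Lemma odd_transposition_terms (y t t' : 'I_n) :
  y != t -> y != t' -> r y != r t -> r t = r t' ->
  ~~ odd ((y < t) + (y < t') + inverted t y + inverted y t + inverted t' y + inverted y t').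
Proof.
rewrite /inverted -!val_eqE /= => + + + <-.
move: (r y) (r t) (val y) (val t) (val t') => ry rt {}y {}t {}t' yt yt' ryt.
by case: (ltngtP y t) yt; case: (ltngtP y t') yt'; case: (ltngtP ry rt) ryt.
Qed.

(* Modulo 2, both halves count the y in G with r y < r t; they differ only in
   the relative order of t and t'. *)
Lemma inversions_facet_parity (G : {set 'I_n}) t t' :
  t \in G -> t' \in G -> t != t' -> r t = r t' ->
  {in G, forall y, y != t -> y != t' -> r y != r t} ->
  odd (#|[set l in G | l < t]| + inversions (G :\ t) +
       (#|[set l in G | l < t']| + inversions (G :\ t'))).
Proof.
move=> tG t'G tt' rtt' r_other.
pose S := \sum_(y in G) ((y < t) + (y < t') + inverted t y + inverted y t
                                             + inverted t' y + inverted y t').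
have oddS : odd S.
  rewrite /S (bigD1 t) //= (bigD1 t') /=; last by rewrite t'G eq_sym.
  set R := \sum_(i | _) _.
  have evenR : ~~ odd R.
    apply: (big_ind (fun k => ~~ odd k)) => // [k l|y /andP[/andP[yG yt] yt']].
      by rewrite oddD => /negbTE-> /negbTE->.
    exact: odd_transposition_terms (r_other y yG yt yt') rtt'.
  rewrite !oddD (negbTE evenR) /inverted rtt' !ltnn !andbF /=.
  by move: tt'; rewrite -val_eqE /=; case: ltngtP.
have := inversions_setD1 tG; have := inversions_setD1 t'G.
by rewrite !card_below; move: oddS; rewrite /S !big_split /=; lia.
Qed.
End Inversions.

Lemma koszul_sign_inversions_cancel (n : nat) (K : fieldType) (r : 'I_n -> nat)
    (G : {set 'I_n}) t t' :
  t \in G -> t' \in G -> t != t' -> r t = r t' ->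
  {in G, forall y, y != t -> y != t' -> r y != r t} ->
  (koszul_sign K G t * (-1) ^+ inversions r (G :\ t) +
   koszul_sign K G t' * (-1) ^+ inversions r (G :\ t') = 0)%R.
Proof.
move=> tG t'G tt' rtt' r_other; rewrite /koszul_sign -!exprD.
rewrite -signr_odd -[X in (_ + X)%R]signr_odd.
have := inversions_facet_parity tG t'G tt' rtt' r_other; rewrite oddD.
by case: odd; case: odd => //= _; rewrite expr1 expr0 ?addNr ?subrr.
Qed.

(** * Matchings and the ideal I(G)^[2] *)

Definition indic (n : nat) (W : {set 'I_n}) : 'I_n -> nat := fun j => j \in W.

Lemma sum_indic (n : nat) (W : {set 'I_n}) : \sum_(j < n) indic W j = #|W|.
Proof.
rewrite -sum1_card [RHS]big_mkcond; apply: eq_bigr => j _.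
by rewrite /indic; case: (j \in W).
Qed.

Lemma kbasis_indic (n : nat) (mem : ('I_n -> nat) -> bool) i (W F : {set 'I_n}) :
  monomial_ideal mem ->
  (F \in kbasis mem i (indic W)) = [&& #|F| == i, F \subset W & mem (indic (W :\: F))].
Proof.
move=> mem_ideal; rewrite inE; congr [&& _, _ & _]; last first.
  have indicD j : indic W j - (j \in F) = indic (W :\: F) j.
    by rewrite /indic inE; case: (j \in W); case: (j \in F).
  by apply/idP/idP; apply: mem_ideal => j; rewrite indicD.
apply/forall_inP/subsetP => [pos x /pos|sub x /sub]; by rewrite /indic lt0b.
Qed.

Section Matchings.
Variables (n : nat) (e : rel 'I_n).
Hypothesis e_simple : simple_graph e.

Definition has_2matching (V : {set 'I_n}) : bool :=
  [exists M, [&& is_matching e M, #|M| == 2 & cover M \subset V]].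

Lemma I2_mem_indic V : I2_mem e (indic V) = has_2matching V.
Proof.
apply: eq_existsb => M; congr [&& _, _ & _].
by apply/forall_inP/subsetP => [pos x /pos|sub x /sub]; rewrite /indic lt0b.
Qed.

Lemma I2_mem_monomial_ideal : monomial_ideal (I2_mem e).
Proof.
move=> b b' le_bb' /existsP[M /and3P[matM cardM /forall_inP posM]].
apply/existsP; exists M; rewrite matM cardM /=.
by apply/forall_inP => v /posM /leq_trans; apply.
Qed.

Lemma kbasis_I2_indic k (W F : {set 'I_n}) :
  (F \in kbasis (I2_mem e) k (indic W)) =
  [&& #|F| == k, F \subset W & has_2matching (W :\: F)].
Proof. by rewrite kbasis_indic ?I2_mem_indic //; exact: I2_mem_monomial_ideal. Qed.

Lemma edge_card E : is_edge e E -> #|E| = 2.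
Proof.
case/existsP => u /existsP [v /andP[euv /eqP ->]]; rewrite cards2.
by have /negbTE-> : u != v by apply: contraTneq euv => ->; rewrite (proj2 e_simple).
Qed.

Lemma matching_edge M E : is_matching e M -> E \in M -> is_edge e E.
Proof. by case/andP => /forall_inP edgeM _ /edgeM. Qed.

Lemma matching_trivIset M : is_matching e M -> trivIset M.
Proof.
case/andP => _ /forall_inP disjM; apply/trivIsetP => E1 E2 E1M E2M.
by move: (disjM E1 E1M) => /forall_inP /(_ E2 E2M) /implyP.
Qed.

Lemma matching_eq (M : {set {set 'I_n}}) E1 E2 x : is_matching e M -> E1 \in M -> E2 \in M ->
  x \in E1 -> x \in E2 -> E1 = E2.
Proof.
move=> /matching_trivIset tiM E1M E2M xE1 xE2.
by rewrite -(def_pblock tiM E1M xE1) (def_pblock tiM E2M xE2).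
Qed.

Lemma matching_sub (M M' : {set {set 'I_n}}) : is_matching e M -> M' \subset M -> is_matching e M'.
Proof.
case/andP => /forall_inP edgeM /forall_inP disjM /subsetP sub; apply/andP; split.
  by apply/forall_inP => E /sub /edgeM.
apply/forall_inP => E1 /sub /disjM /forall_inP disjE1.
by apply/forall_inP => E2 /sub /disjE1.
Qed.

Lemma card_cover_matching M : is_matching e M -> #|cover M| = 2 * #|M|.
Proof.
move=> matM; move/eqP: (matching_trivIset matM) => <-.
rewrite (eq_bigr (fun _ => 2)) => [|E EM]; first by rewrite sum_nat_const mulnC.
exact/edge_card/(matching_edge matM).
Qed.

Lemma has_2matching_pair (M : {set {set 'I_n}}) E1 E2 (V : {set 'I_n}) :
  is_matching e M -> E1 \in M -> E2 \in M -> E1 != E2 -> E1 :|: E2 \subset V -> has_2matching V.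
Proof.
move=> matM E1M E2M E12 E12V; apply/existsP; exists [set E1; E2].
rewrite cards2 E12 /= (matching_sub matM) /=; last first.
  by apply/subsetP => E; rewrite !inE => /orP[]/eqP->.
by apply: subset_trans E12V; apply/bigcupsP => E; rewrite !inE => /orP[]/eqP->;
  rewrite ?subsetUl ?subsetUr.
Qed.

Lemma has_2matching_card (V : {set 'I_n}) : has_2matching V -> 4 <= #|V|.
Proof.
case/existsP => M /and3P[matM /eqP cardM /subset_leq_card].
by rewrite card_cover_matching // cardM.
Qed.

Definition almost_induced (M : {set {set 'I_n}}) (p q : {set 'I_n}) : Prop :=
  forall E, is_edge e E -> E \subset cover M -> (E \in M) || (E \subset p :|: q).
End Matchings.

(** * A nonzero Koszul class for an almost induced matching *)

Section AlmostInducedMatching.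
Variables (n : nat) (e : rel 'I_n) (K : fieldType).
Hypothesis e_simple : simple_graph e.
Variables (M : {set {set 'I_n}}) (p q : {set 'I_n}) (u : 'I_n) (m : nat).
Hypotheses (matM : is_matching e M) (pM : p \in M) (qM : q \in M) (pq : p != q).
Hypotheses (up : u \in p) (card_M : #|M| = m.+3).
Hypothesis M_almost_induced : almost_induced e M p q.

Local Notation W := (cover M).
Local Notation E0 := (M :\: [set p; q]).
Local Notation U := (cover E0).

Lemma in_E0 E : (E \in E0) = [&& E != p, E != q & E \in M].
Proof. by rewrite !inE negb_or andbA. Qed.

Lemma E0_sub_M : E0 \subset M.
Proof. exact: subsetDl. Qed.

Lemma U_sub_W : U \subset W.
Proof. by apply/bigcupsP => E /(subsetP E0_sub_M) EM; exact: bigcup_sup. Qed.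

Lemma notin_pq_U x : x \in U -> (x \notin p) && (x \notin q).
Proof.
case/bigcupP => E; rewrite in_E0 => /and3P[Ep Eq EM] xE.
apply/andP; split; apply/negP => xpq.
  by move: Ep; rewrite (matching_eq matM EM pM xE xpq) eqxx.
by move: Eq; rewrite (matching_eq matM EM qM xE xpq) eqxx.
Qed.

Lemma in_pq_W_U x : x \in W -> x \notin U -> x \in p :|: q.
Proof.
case/bigcupP => E EM xE; apply: contraNT => xnpq; apply/bigcupP; exists E => //.
by rewrite in_E0 EM andbT; apply/andP; split; apply: contraNneq xnpq => <-;
  rewrite inE xE ?orbT.
Qed.

Lemma card_E0 : #|E0| = m.+1.
Proof.
rewrite cardsD (setIidPr _) ?cards2 ?pq ?card_M //.
by apply/subsetP => E; rewrite !inE => /orP[]/eqP->.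
Qed.

Definition pick_vertex (E : {set 'I_n}) : 'I_n := odflt u [pick x in E].

Lemma pick_vertex_in E : E \in M -> pick_vertex E \in E.
Proof.
move=> EM; rewrite /pick_vertex; case: pickP => //= E0.
by move: (edge_card e_simple (matching_edge matM EM)); rewrite (eq_card0 E0).
Qed.

Definition T0 : {set 'I_n} := [set pick_vertex E | E in E0].

Lemma T0_sub_U : T0 \subset U.
Proof.
apply/subsetP => x /imsetP [E EE0 ->]; apply/bigcupP; exists E => //.
exact/pick_vertex_in/(subsetP E0_sub_M).
Qed.

Lemma T0_meet E : E \in E0 -> T0 :&: E = [set pick_vertex E].
Proof.
move=> EE0; have EM := subsetP E0_sub_M _ EE0.
apply/setP => x; rewrite !inE; apply/andP/eqP => [[/imsetP [E' E'E0 ->] xE]|->].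
  by rewrite (matching_eq matM EM (subsetP E0_sub_M _ E'E0) xE (pick_vertex_in _)) //;
    exact: (subsetP E0_sub_M).
by split; [apply/imsetP; exists E | exact: pick_vertex_in].
Qed.

Lemma card_T0 : #|T0| = m.+1.
Proof.
rewrite card_in_imset ?card_E0 // => E1 E2 /(subsetP E0_sub_M) E1M /(subsetP E0_sub_M) E2M eq12.
by apply: (matching_eq matM E1M E2M (pick_vertex_in E1M)); rewrite eq12 pick_vertex_in.
Qed.

Definition tau : {set 'I_n} := u |: T0.

Lemma u_notin_U : u \notin U.
Proof. by apply: contraL up => /notin_pq_U /andP[]. Qed.

Lemma u_notin_T0 : u \notin T0.
Proof. by apply: contraNN u_notin_U; apply: (subsetP T0_sub_U). Qed.

Lemma card_tau : #|tau| = m.+2.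
Proof. by rewrite cardsU1 u_notin_T0 card_T0. Qed.
Lemma pq_sub_W : p :|: q \subset W.
Proof. by rewrite subUset !bigcup_sup. Qed.

Lemma T0_disjoint_pq : [disjoint T0 & p :|: q].
Proof.
rewrite disjoints_subset; apply/subsetP => x /(subsetP T0_sub_U) /notin_pq_U.
by rewrite !inE negb_or.
Qed.

Lemma tau_disjoint_q : [disjoint tau & q].
Proof.
rewrite disjoints_subset; apply/subsetP => x /setU1P [->|xT0]; rewrite inE.
  by apply/negP => uq; move: pq; rewrite (matching_eq matM pM qM up uq) eqxx.
by rewrite (disjointFr (disjointWr (subsetUr p q) T0_disjoint_pq) xT0).
Qed.

Lemma tau_meet E : E \in E0 -> tau :&: E = [set pick_vertex E].
Proof.
move=> EE0; have EM := subsetP E0_sub_M _ EE0.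
rewrite -(T0_meet EE0); apply/setP => x; rewrite !inE.
case: eqVneq => [->|] //=; rewrite (negbTE u_notin_T0); apply/negbTE/negP => uE.
by move: EE0; rewrite (matching_eq matM EM pM uE up) in_E0 eqxx.
Qed.

Lemma tau_facet_kbasis j : j \in tau -> tau :\ j \in kbasis (I2_mem e) m.+1 (indic W).
Proof.
move=> jtau; rewrite kbasis_I2_indic; apply/and3P; split.
- by have := cardsD1 j tau; rewrite jtau card_tau add1n => -[<-].
- apply: subset_trans (subD1set _ _) _; rewrite subUset sub1set (subsetP pq_sub_W) ?inE ?up //.
  exact: subset_trans T0_sub_U U_sub_W.
have [->|ju] := eqVneq j u.
  rewrite setU1K ?u_notin_T0 //; apply: (has_2matching_pair matM pM qM pq).
  by rewrite subsetD pq_sub_W disjoint_sym T0_disjoint_pq.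
have /imsetP [E EE0 jE] : j \in T0 by move: jtau; rewrite !inE (negbTE ju).
have EM := subsetP E0_sub_M _ EE0.
have qE : q != E by move: EE0; rewrite in_E0 => /and3P[_ Eq _]; rewrite eq_sym.
apply: (has_2matching_pair matM qM EM qE).
rewrite subsetD subUset !bigcup_sup //= disjoints_subset.
apply/subsetP => x qEx; rewrite inE in_setD1 negb_and negbK orbC -implybE.
apply/implyP => xtau.
case/setUP: qEx => [xq|xE]; first by rewrite (disjointFr tau_disjoint_q xtau) in xq.
by move/setP: (tau_meet EE0) => /(_ x); rewrite in_setI xtau xE -jE inE.
Qed.

Definition transversal (T : {set 'I_n}) : bool :=
  (T \subset U) && [forall E in E0, #|T :&: E| == 1].

Lemma transversal_meet T E : transversal T -> E \in E0 -> exists t, T :&: E = [set t].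
Proof. by case/andP => _ /forall_inP meet1 /meet1 /cards1P. Qed.

Lemma transversal_T0 : transversal T0.
Proof. by rewrite /transversal T0_sub_U; apply/forall_inP => E /T0_meet ->; rewrite cards1. Qed.

Lemma transversal_facet_in_U G j0 : G \in kbasis (I2_mem e) m.+2 (indic W) ->
  j0 \in G -> transversal (G :\ j0) -> j0 \in U.
Proof.
rewrite kbasis_I2_indic => /and3P[_ GW /existsP [M' /and3P[matM' /eqP cardM' M'WG]]] j0G trG.
apply: contraT => j0nU; have j0pq := in_pq_W_U (subsetP GW _ j0G) j0nU.
suff /subset_leq_card : cover M' \subset (p :|: q) :\ j0.
  have := cardsD1 j0 (p :|: q); rewrite j0pq cardsU (card_cover_matching e_simple matM').
  rewrite cardM' (edge_card e_simple (matching_edge matM pM)).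
  rewrite (edge_card e_simple (matching_edge matM qM)) => cardD le4.
  by clear -cardD le4; lia.
apply/bigcupsP => E' E'M'.
have E'WG : E' \subset W :\: G := subset_trans (bigcup_sup _ E'M') M'WG.
have E'pq : E' \subset p :|: q.
  have := M_almost_induced (matching_edge matM' E'M') (subset_trans E'WG (subsetDl _ _)).
  case/orP=> [E'M|//]; have [->|E'p] := eqVneq E' p; first exact: subsetUl.
  have [->|E'q] := eqVneq E' q; first exact: subsetUr.
  have E'E0 : E' \in E0 by rewrite in_E0 E'p E'q.
  have [t /setP /(_ t)] := transversal_meet trG E'E0.
  rewrite !inE eqxx => /andP[/andP[_ tG] tE'].
  by have := subsetP E'WG _ tE'; rewrite inE tG.
apply/subsetP => x xE'; rewrite in_setD1 (subsetP E'pq) // andbT.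
by apply: contraTneq (subsetP E'WG _ xE') => ->; rewrite inE j0G.
Qed.

Definition edge_rank (x : 'I_n) : nat := enum_rank (pblock M x).

Lemma edge_rank_eq E1 E2 x y : E1 \in M -> E2 \in M -> x \in E1 -> y \in E2 ->
  (edge_rank x == edge_rank y) = (E1 == E2).
Proof.
move=> E1M E2M xE1 yE2; have tiM := matching_trivIset matM.
by rewrite /edge_rank (def_pblock tiM E1M xE1) (def_pblock tiM E2M yE2) val_eqE
  (inj_eq enum_rank_inj).
Qed.

Lemma transversal_exchange (G : {set 'I_n}) j0 E t : E \in E0 -> j0 \in E -> j0 \in G ->
  transversal (G :\ j0) -> (G :\ j0) :&: E = [set t] -> transversal (G :\ t).
Proof.
move=> EE0 j0E j0G trGj0 GtE; have EM := subsetP E0_sub_M _ EE0.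
have /setIP [/setD1P [tj0 tG] tE] : t \in (G :\ j0) :&: E by rewrite GtE set11.
apply/andP; split.
  apply/subsetP => x /setD1P [xt xG]; have [->|xj0] := eqVneq x j0.
    by apply/bigcupP; exists E.
  by case/andP: trGj0 => /subsetP-> //; rewrite !inE xj0 xG.
apply/forall_inP => E' E'E0; have [->|E'E] := eqVneq E' E.
  suff -> : (G :\ t) :&: E = [set j0] by rewrite cards1.
  apply/setP => x; rewrite !inE; have [->|xj0] := eqVneq x j0.
    by rewrite eq_sym tj0 j0G j0E.
  apply/negbTE/negP => /andP[/andP[xt xG] xE]; case/negP: xt.
  by rewrite -in_set1 -GtE !inE xj0 xG xE.
suff -> : (G :\ t) :&: E' = (G :\ j0) :&: E' by case/andP: trGj0 => _ /forall_inP->.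
apply/setP => x; rewrite !inE; case xE': (x \in E'); rewrite ?andbF ?andbT //.
have xnE : x \notin E.
  apply: contra E'E => xE; apply/eqP.
  exact: matching_eq matM (subsetP E0_sub_M _ E'E0) EM xE' xE.
have xt : x != t by apply: contraNneq xnE => ->.
have xj0 : x != j0 by apply: contraNneq xnE => ->.
by rewrite xt xj0.
Qed.

Local Open Scope ring_scope.

(* The sign compares the order of the vertices of [F] with the order of the
   edges of [M] containing them. *)
Definition cochain (F : {set 'I_n}) : K :=
  if transversal F then (-1) ^+ inversions edge_rank F else 0.

Lemma cochain_cocycle G : G \in kbasis (I2_mem e) m.+2 (indic W) ->
  \sum_(j in G) koszul_sign K G j * cochain (G :\ j) = 0.
Proof.
move=> Gk; have [/exists_inP [j0 j0G trGj0]|no_tr] :=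
  boolP [exists j0 in G, transversal (G :\ j0)]; last first.
  apply: big1 => j jG; rewrite /cochain ifF ?mulr0 //.
  by apply: contraNF no_tr => trGj; apply/exists_inP; exists j.
have /bigcupP [E EE0 j0E] := transversal_facet_in_U Gk j0G trGj0.
have EM := subsetP E0_sub_M _ EE0.
have [t GtE] := transversal_meet trGj0 EE0.
have /setIP [/setD1P [tj0 tG] tE] : t \in (G :\ j0) :&: E by rewrite GtE set11.
have GU : G :\ j0 \subset U by case/andP: trGj0.
rewrite (bigD1 t) // (bigD1 j0) /=; last by rewrite j0G eq_sym.
rewrite big1 ?addr0 => [|j /andP[/andP[jG jt] jj0]]; last first.
  rewrite /cochain ifF ?mulr0 //; apply/negbTE/negP => /andP[_ /forall_inP /(_ E EE0)].
  have : [set t; j0] \subset (G :\ j) :&: E.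
    apply/subsetP => x; rewrite !inE => /orP[]/eqP->.
      by rewrite tG tE eq_sym jt.
    by rewrite j0G j0E eq_sym jj0.
  by move/subset_leq_card; rewrite cards2 tj0 => /[swap] /eqP->.
rewrite /cochain (transversal_exchange EE0 j0E j0G trGj0 GtE) trGj0.
apply: koszul_sign_inversions_cancel => //.
  by apply/eqP; rewrite (edge_rank_eq EM EM tE j0E).
move=> y yG yt yj0; have /bigcupP [Ey EyE0 yEy] : y \in U.
  by apply: (subsetP GU); rewrite !inE yj0 yG.
rewrite (edge_rank_eq (subsetP E0_sub_M _ EyE0) EM yEy tE).
apply: contra yt => /eqP Ey_E; rewrite -in_set1 -GtE !inE yj0 yG.
by rewrite -Ey_E yEy.
Qed.

Lemma cochain_pairing :
  \sum_(j in tau) koszul_sign K tau j * cochain (tau :\ j) != 0.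
Proof.
rewrite (bigD1 u) ?setU11 //= big1 ?addr0 => [|j /andP[jtau ju]].
  by rewrite setU1K ?u_notin_T0 // /cochain transversal_T0 mulf_neq0 ?signr_eq0.
rewrite /cochain ifF ?mulr0 //; apply/negbTE/negP => /andP[/subsetP /(_ u) uU _].
by move: u_notin_U; rewrite uU // !inE eq_sym ju eqxx.
Qed.

Lemma betti_almost_induced : betti K (I2_mem e) m.+1 (indic W) != 0%N.
Proof.
apply: (betti_neq0_of_boundary_pairing (@I2_mem_monomial_ideal n e) tau_facet_kbasis).
  exact: cochain_cocycle.
exact: cochain_pairing.
Qed.

Lemma reg_at_least_almost_induced : reg_at_least K (I2_mem e) (#|M| + 2).
Proof.
exists m.+1, (indic W); split; first exact: betti_almost_induced.
by rewrite sum_indic (card_cover_matching e_simple matM) card_M; lia.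
Qed.
End AlmostInducedMatching.

(** * Two-admissible matchings *)

Lemma sumn_pos (s : seq nat) : all (fun a => 0 < a) s ->
  sumn s = \sum_(a <- s) (a - 1) + size s.
Proof. by elim: s => [|a s IH] /=; rewrite ?big_nil ?big_cons // => /andP[a0 /IH->]; lia. Qed.

Lemma adm_seq2_excess (s : seq nat) : adm_seq 2 s -> \sum_(a <- s) (a - 1) <= 1.
Proof. by case/andP => /sumn_pos->; lia. Qed.

Lemma excess_le1_pair (T : finType) (P : {set {set T}}) :
  \sum_(B in P) (#|B| - 1) <= 1 -> 1 < #|cover P| ->
  exists x y, [/\ x \in cover P, y \in cover P, x != y &
    {in P, forall (B : {set T}) x' y', x' \in B -> y' \in B -> x' != y' ->
       (x' \in [set x; y]) && (y' \in [set x; y])}].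
Proof.
move=> excess cover_gt1.
have [/exists_inP [B BP B_gt1]|no_big] := boolP [exists B in P, 1 < #|B|]; last first.
  case/card_gt1P: cover_gt1 => x [y [xP yP xy]]; exists x, y; split=> // B BP x' y' x'B y'B x'y'.
  by case/negP: no_big; apply/exists_inP; exists B => //; apply/card_gt1P; exists x', y'.
have /cards2P [x [y [xy defB]]] : #|B| == 2.
  by move: excess; rewrite eqn_leq B_gt1 (bigD1 B) //= andbT; lia.
have [xP yP] : x \in cover P /\ y \in cover P.
  by split; apply/bigcupP; exists B; rewrite // defB !inE eqxx ?orbT.
exists x, y; split=> // B' B'P x' y' x'B' y'B' x'y'.
have B'_gt1 : 1 < #|B'| by apply/card_gt1P; exists x', y'.
suff BB' : B = B' by rewrite -BB' defB in x'B' y'B'; rewrite x'B' y'B'.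
apply/eqP; apply: contraTT excess => BB'; rewrite -ltnNge (bigD1 B) //= (bigD1 B') /=.
  by lia.
by rewrite B'P eq_sym.
Qed.

Section TwoAdmissible.
Variables (n : nat) (e : rel 'I_n).
Hypothesis e_simple : simple_graph e.

Lemma two_admissible_pair (M : {set {set 'I_n}}) : k_admissible e 2 M -> 1 < #|M| ->
  exists p q, [/\ p \in M, q \in M, p != q & almost_induced e M p q].
Proof.
case=> matM [P [partP [gapP [admP _]]]] M_gt1.
have coverP : cover P = M := cover_partition partP.
have excess : \sum_(B in P) (#|B| - 1) <= 1.
  by move: (adm_seq2_excess admP); rewrite big_map big_enum.
have cover_gt1 : 1 < #|cover P| by rewrite coverP.
have [p [q []]] := excess_le1_pair excess cover_gt1.
rewrite coverP => pM qM pq same_part; exists p, q; split=> // E' edgeE' E'W.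
case/existsP: (edgeE') => x /existsP [y /andP[exy /eqP defE']].
have [xW yW] : x \in cover M /\ y \in cover M.
  by split; apply: (subsetP E'W); rewrite defE' !inE eqxx ?orbT.
case/bigcupP: xW => E1 E1M xE1; case/bigcupP: yW => E2 E2M yE2.
have [eqE12|E12] := eqVneq E1 E2.
  rewrite -eqE12 in yE2; suff -> : E' = E1 by rewrite E1M.
  apply/eqP; rewrite eqEcard (edge_card e_simple edgeE').
  rewrite (edge_card e_simple (matching_edge matM E1M)) leqnn andbT defE'.
  by apply/subsetP => z; rewrite !inE => /orP[]/eqP->.
move: E1M E2M; rewrite -coverP => /bigcupP [B1 B1P E1B1] /bigcupP [B2 B2P E2B2].
have [B12|] := eqVneq B1 B2; last first.
  move/(gapP _ _ B1P B2P)/(_ _ _ E1B1 E2B2) => /andP[_ /forall_inP /(_ x xE1)].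
  by move/forall_inP/(_ y yE2); rewrite exy.
rewrite -B12 in E2B2; case/andP: (same_part B1 B1P E1 E2 E1B1 E2B2 E12).
rewrite defE' => /set2P E1pq /set2P E2pq; apply/orP; right.
apply/subsetP => z /set2P[]->; apply/setUP.
  by case: E1pq => <-; [left | right].
by case: E2pq => <-; [left | right].
Qed.
End TwoAdmissible.

Lemma bigmax_attained (I : finType) (P : pred I) (F : I -> nat) :
  0 < \max_(i | P i) F i -> exists2 i, P i & F i = \max_(i | P i) F i.
Proof.
case: (pickP P) => [i0 Pi0 _|P0]; last by rewrite big_pred0.
by exists [arg max_(i > i0 | P i) F i]; [case: arg_maxnP | rewrite (bigmax_eq_arg _ Pi0)].
Qed.

Lemma propbP (P : Prop) : propb P -> P.
Proof. by rewrite /propb; case: excluded_middle_informative. Qed.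

Lemma reg_at_least_le (n : nat) (K : fieldType) (mem : ('I_n -> nat) -> bool) r r' :
  r' <= r -> reg_at_least K mem r -> reg_at_least K mem r'.
Proof.
move=> le_r [i [a [betti_ia deg_a]]]; exists i, a; split=> //.
by apply: leq_trans deg_a; rewrite leq_add2r.
Qed.

Lemma reg_at_least_four (n : nat) (e : rel 'I_n) (K : fieldType) (M : {set {set 'I_n}}) :
  simple_graph e -> is_matching e M -> #|M| = 2 ->
  reg_at_least K (I2_mem e) 4.
Proof.
move=> e_simple matM cardM; set W := cover M.
have cardW : #|W| = 4 by rewrite (card_cover_matching e_simple matM) cardM.
have no_kbasis1 F : F \notin kbasis (I2_mem e) 1 (indic W).
  rewrite kbasis_I2_indic; apply/negP => /and3P[/eqP cardF FW /(has_2matching_card e_simple)].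
  by rewrite cardsD (setIidPr FW) cardW cardF.
have kdiff0 : kdiff K (I2_mem e) 0 (indic W) = 0%R.
  by apply/matrixP => i j; rewrite kdiffE mxE /kcoef (negbTE (no_kbasis1 _)).
exists 0, (indic W); split; last by rewrite sum_indic cardW.
rewrite /betti kdiff0 mxrank0 !subn0 -lt0n; apply/card_gt0P; exists set0.
rewrite kbasis_I2_indic cards0 sub0set setD0; apply/existsP; exists M.
by rewrite matM cardM eqxx subxx.
Qed.

Theorem corollary4p11 (n : nat) (e : rel 'I_n) (K : fieldType) :
  simple_graph e -> (2 <= mat e)%N ->
  reg_at_least K (I2_mem e) (aim e 2 + 2).
Proof.
move=> e_simple mat_ge2.
have [M0 matM0 cardM0] := bigmax_attained (ltnW mat_ge2).
have [E1 [E2 [E1M0 E2M0 E12]]] : exists E1 E2, [/\ E1 \in M0, E2 \in M0 & E1 != E2].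
  by apply/card_gt1P; rewrite cardM0.
have reg4 : reg_at_least K (I2_mem e) 4.
  apply: (reg_at_least_four K (M := [set E1; E2]) e_simple); last by rewrite cards2 E12.
  by apply: (matching_sub matM0); apply/subsetP => E /set2P[]->.
have [aim_le2|aim_gt2] := leqP (aim e 2) 2.
  by apply: reg_at_least_le reg4; rewrite -[4]/(2 + 2) leq_add2r.
have [M /propbP admM cardM] := bigmax_attained (ltnW (ltnW aim_gt2)).
rewrite /aim -cardM in aim_gt2 *.
have [m card_M] : exists m, #|M| = m.+3 by exists (#|M| - 3); lia.
have [p [q [pM qM pq M_almost]]] := two_admissible_pair e_simple admM (ltnW aim_gt2).
have matM : is_matching e M by case: admM.
have [u up] : exists u, u \in p.
  by apply/set0Pn; rewrite -card_gt0 (edge_card e_simple (matching_edge matM pM)).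
exact (reg_at_least_almost_induced K e_simple matM pM qM pq up card_M M_almost).
Qed.
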